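(* Run MUDAN on a reported profile $\theta'$ with nonempty final winner set $W$, and let $w^*$ be the last buyer added to $W$. If a buyer $y$ has reported valuation strictly larger than the reported valuation of every winner, i.e. $v'_y>v'_w$ for all $w\in W$, then $w^*$ is critical for $y$: every directed path from $s$ to $y$ in $G_{\theta'}$ passes through $w^*$. In particular, under truthful reporting ($\theta'=\theta$), such a $y$ does not belong to $B^*$, the set of buyers for which $w^*$ is not critical.
   Context: Single-demand model. A seller $s$ has $m\ge 1$ identical items. Buyers $B=\{1,\dots,n\}$; buyer $i$ has a true valuation $v_i\in\mathbb{R}_{\ge0}$ and true neighbour set $r_i\subseteq B$; the seller has a fixed neighbour set $r_s\subseteq B$. Buyer $i$ reports $(v'_i,r'_i)$ with $v'_i\ge 0$, $r'_i\subseteq r_i$; the truthful profile is $\theta$. The profile graph $G_{\theta'}$ is the directed graph on $\{s\}\cup B$ with an edge $(x,y)$ iff $y\in r'_x$ (for $x=s$ use $r_s$). A buyer $w$ is critical for a buyer $i$ if every directed path from $s$ to $i$ in $G_{\theta'}$ passes through $w$. Priority rule: each buyer $i$ is given a priority $\sigma_i$ that is a function of its reported neighbour set $r'_i$ only (e.g. $\sigma_i=|r'_i|$), independent of all reported valuations and non-decreasing with respect to inclusion of $r'_i$; ties are broken by a fixed total order on buyers. MUDAN, run on a reported profile $\theta'$. It maintains an explored set $A\subseteq B$, a winner set $W\subseteq A$, remaining supply $m'=m-|W|$, and tentative payments. For current $A,W$ the potential-winner set $P(A,W)$ is: $P=A$ if $|A\setminus W|\le m'$; otherwise $P=W\cup\{$the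 $m'$ buyers of $A\setminus W$ with highest reported valuations$\}$ (ties broken by a fixed total order). Buyers in $A\setminus P$ are called exhausted. Initialise $A=r_s$, $W=\varnothing$, and repeat: (1) Closure: while some buyer $x\in W\cup(A\setminus P(A,W))$ (with $P$ recomputed from the current $A,W$) has $r'_x\not\subseteq A$, set $A\leftarrow A\cup r'_x$. (2) Let $P=P(A,W)$; if $P\setminus W=\varnothing$, stop. (3) Let $w$ be the buyer of $P\setminus W$ with highest priority; set its tentative payment $\hat p_w$ to the $(m'+1)$-th highest reported valuation in $A\setminus W$ (current $m'$, before adding $w$), or $0$ if $|A\setminus W|\le m'$; add $w$ to $W$. Output: every $w\in W$ gets an item and pays $\hat p_w$; other buyers get nothing and pay $0$. *)

(* Model of MUDAN (single-demand, m identical items). *)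
From mathcomp Require Import all_boot all_order all_algebra.
Set Implicit Arguments. Unset Strict Implicit. Unset Printing Implicit Defensive.
Import Order.TTheory GRing.Theory Num.Theory.
Local Open Scope ring_scope.

Section Mudan.
Variables (R : realDomainType) (n : nat).
Notation B := 'I_n.

(* ---------- profile graph G_theta' on nodes {s} u B  (s = None) ---------- *)
Definition edge (rs : {set B}) (r : B -> {set B}) : rel (option B) :=
  fun x y => match x, y with
             | None, Some b => b \in rs
             | Some a, Some b => b \in r a
             | _, _ => false
             end.

Definition critical (rs : {set B}) (r : B -> {set B}) (w y : B) : Prop :=
  forall p : seq (option B),
    path (edge rs r) None p -> last None p = Some y -> Some w \in p.

Definition Bstar (rs : {set B}) (r : B -> {set B}) (w : B) : B -> Prop :=
  fun y => ~ critical rs r w y.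

Definition beats (v : B -> R) (tbv : B -> nat) (x z : B) : bool :=
  (v z < v x) || ((v x == v z) && (tbv x < tbv z))%N.

Definition topk (v : B -> R) (tbv : B -> nat) (k : nat) (S : {set B}) : {set B} :=
  [set x in S | #|[set z in S | beats v tbv z x]| < k]%N.

Definition winset (Ws : seq B) : {set B} := [set x in Ws].

Definition potential (m : nat) (v : B -> R) (tbv : B -> nat)
    (A : {set B}) (Ws : seq B) : {set B} :=
  let W := winset Ws in
  let m' := (m - size Ws)%N in
  if (#|A :\: W| <= m')%N then A else W :|: topk v tbv m' (A :\: W).

Definition closed (m : nat) (v : B -> R) (tbv : B -> nat) (r : B -> {set B})
    (A : {set B}) (Ws : seq B) : Prop :=
  forall x, x \in winset Ws :|: (A :\: potential m v tbv A Ws) -> r x \subset A.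

Definition max_priority (sigma : {set B} -> R) (r : B -> {set B})
    (tbp : B -> nat) (S : {set B}) (w : B) : Prop :=
  w \in S /\
  forall z, z \in S -> z != w ->
    (sigma (r z) < sigma (r w)) ||
    ((sigma (r z) == sigma (r w)) && (tbp w < tbp z)%N).

(* one step of MUDAN on states (A, W) ; W is kept as the sequence of winners
   in order of addition (payments are irrelevant here and are not tracked) *)
Inductive mstep (m : nat) (v : B -> R) (r : B -> {set B})
    (sigma : {set B} -> R) (tbv tbp : B -> nat) :
    {set B} * seq B -> {set B} * seq B -> Prop :=
| closure_step A Ws x :
    x \in winset Ws :|: (A :\: potential m v tbv A Ws) ->
    ~~ (r x \subset A) ->
    mstep m v r sigma tbv tbp (A, Ws) (A :|: r x, Ws)
| select_step A Ws w :
    closed m v tbv r A Ws ->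
    max_priority sigma r tbp (potential m v tbv A Ws :\: winset Ws) w ->
    mstep m v r sigma tbv tbp (A, Ws) (A, rcons Ws w).

Inductive reach (m : nat) (v : B -> R) (r : B -> {set B})
    (sigma : {set B} -> R) (tbv tbp : B -> nat) :
    {set B} * seq B -> {set B} * seq B -> Prop :=
| reach_refl st : reach m v r sigma tbv tbp st st
| reach_step st1 st2 st3 :
    mstep m v r sigma tbv tbp st1 st2 -> reach m v r sigma tbv tbp st2 st3 ->
    reach m v r sigma tbv tbp st1 st3.

Definition mudan_run (m : nat) (rs : {set B}) (v : B -> R) (r : B -> {set B})
    (sigma : {set B} -> R) (tbv tbp : B -> nat) (A : {set B}) (Ws : seq B) : Prop :=
  reach m v r sigma tbv tbp (rs, [::]) (A, Ws) /\
  closed m v tbv r A Ws /\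
  potential m v tbv A Ws :\: winset Ws = set0.

End Mudan.

From Pilot Require Import Defs.
From mathcomp Require Import all_boot all_order all_algebra.
From mathcomp Require Import zify.
Import Order.TTheory GRing.Theory Num.Theory.
Local Open Scope ring_scope.
Set Implicit Arguments. Unset Strict Implicit.

(* Let (A1, W0) be the state of MUDAN at the moment the last
   winner w* is selected.  Every explored non-winner z <> w* of A1 is still
   an explored non-winner at termination, and termination with such a buyer
   left over forces the remaining supply to be 0; hence exactly one item was
   left when w* was chosen.  With one item left (and at least two candidates)
   the only potential non-winner is the top-ranked buyer of A1 \ W0, which
   must be w*.  So w* outranks every other buyer of A1 \ W0, and no such buyer
   is a potential winner.  Now take a path from s to y avoiding w*.  If y lies
   in A1 it would outrank w*, impossible.  Otherwise the path leaves A1 from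
   some a in A1 with a <> w*; by closure, a is a potential non-winner of
   (A1, W0), again impossible. *)

Section Ranking.
Variables (R : realDomainType) (n : nat) (v : 'I_n -> R) (tbv : 'I_n -> nat).

Lemma beats_irr x : ~~ beats v tbv x x.
Proof. by rewrite /beats ltxx ltnn andbF. Qed.

Lemma beats_trans a b c : beats v tbv a b -> beats v tbv b c -> beats v tbv a c.
Proof.
rewrite /beats => /orP[hab|/andP[/eqP eab tab]] /orP[hbc|/andP[/eqP ebc tbc]].
- by rewrite (lt_trans hbc hab).
- by rewrite -ebc hab.
- by rewrite eab hbc.
- by rewrite eab ebc eqxx (ltn_trans tab tbc) orbT.
Qed.

Lemma beats_total a b : injective tbv -> a != b -> beats v tbv a b || beats v tbv b a.
Proof.
move=> tbvI hab; rewrite /beats.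
case: (ltgtP (v a) (v b)) => //= _; rewrite ?orbT //=.
have : tbv a != tbv b by apply: contra hab => /eqP /tbvI ->.
by rewrite neq_ltn => /orP[] ->; rewrite ?orbT.
Qed.

(* A buyer minimizing the number of buyers ranked above it is unbeaten. *)
Lemma topk_nonempty k (S : {set 'I_n}) z :
  (0 < k)%N -> z \in S -> exists x, x \in topk v tbv k S.
Proof.
move=> k_gt0 zS.
have [x xS xmin] := arg_minnP (fun i => #|[set u in S | beats v tbv u i]|) zS.
exists x; rewrite inE; apply/andP; split=> //.
suff -> : [set u in S | beats v tbv u x] = set0 by rewrite cards0.
apply/setP => u; rewrite !inE; apply/negP => /andP[uS bux].
have := xmin u uS; rewrite leqNgt => /negP; apply; apply: proper_card.
apply/properP; split; last by exists u; rewrite !inE ?uS ?bux ?(negbTE (beats_irr u)) ?andbF.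
apply/subsetP => t; rewrite !inE => /andP[-> btu] /=; exact: beats_trans btu bux.
Qed.

Lemma topk1_max (S : {set 'I_n}) x u :
  x \in topk v tbv 1 S -> u \in S -> ~~ beats v tbv u x.
Proof.
rewrite inE ltnS leqn0 cards_eq0 => /andP[_ /eqP above0] uS.
by apply: contraT; rewrite negbK => bux; move/setP/(_ u): above0; rewrite !inE uS bux.
Qed.

Lemma topk1_unique (S : {set 'I_n}) x x' : injective tbv ->
  x \in topk v tbv 1 S -> x' \in topk v tbv 1 S -> x = x'.
Proof.
move=> tbvI xtop x'top; apply/eqP; apply: contraT => xx'.
have xS : x \in S by move: xtop; rewrite inE => /andP[].
have x'S : x' \in S by move: x'top; rewrite inE => /andP[].
by case/orP: (beats_total tbvI xx') => b;
  [move: (topk1_max x'top xS) | move: (topk1_max xtop x'S)]; rewrite b.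
Qed.

End Ranking.

Section Potential.
Variables (R : realDomainType) (n m : nat) (v : 'I_n -> R) (tbv : 'I_n -> nat).
Variables (A : {set 'I_n}) (W : seq 'I_n).

Lemma potential_sub x :
  x \in potential m v tbv A W :\: winset W -> x \in A :\: winset W.
Proof.
rewrite /potential; case: ifP => // _.
rewrite !inE => /andP[xW /orP[xW'|/andP[]]] //; by rewrite xW' in xW.
Qed.

Lemma potential_supply x :
  x \in potential m v tbv A W :\: winset W -> (0 < m - size W)%N.
Proof.
move=> xP; have xAW := potential_sub xP; move: xP.
rewrite /potential; case: ifP => [fits _|_].
  by apply: leq_trans fits; apply/card_gt0P; exists x.
rewrite !inE => /andP[xW /orP[xW'|/andP[_ above]]]; first by rewrite xW' in xW.
exact: leq_ltn_trans (leq0n _) above.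
Qed.

Lemma exhausted_supply z :
  potential m v tbv A W :\: winset W = set0 ->
  z \in A :\: winset W -> (m - size W = 0)%N.
Proof.
move=> noP zAW; case: (posnP (m - size W)) => // supply_gt0.
move: noP; rewrite /potential; case: ifP => [_ noP|_ /setP noP].
  by move: zAW; rewrite noP inE.
have [x xtop] := topk_nonempty v tbv supply_gt0 zAW.
have xAW : x \in A :\: winset W by move: xtop; rewrite inE => /andP[].
by move: (noP x) xAW; rewrite in_setD in_setU xtop orbT andbT !inE => ->.
Qed.

Lemma potential_last_item :
  (m - size W = 1)%N -> (1 < #|A :\: winset W|)%N ->
  potential m v tbv A W :\: winset W = topk v tbv 1 (A :\: winset W).
Proof.
move=> one_left crowded; rewrite /potential one_left leqNgt crowded /=.
by apply/setP => x; rewrite !inE; case: (x \in W).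
Qed.

End Potential.

Lemma winset_rcons n (W : seq 'I_n) w : winset (rcons W w) = w |: winset W.
Proof. by apply/setP => x; rewrite !inE mem_rcons in_cons. Qed.

Section Runs.
Variables (R : realDomainType) (n m : nat) (v : 'I_n -> R) (r : 'I_n -> {set 'I_n})
  (sigma : {set 'I_n} -> R) (tbv tbp : 'I_n -> nat).
Notation reach := (reach m v r sigma tbv tbp).

Lemma reach_mono st1 st2 : reach st1 st2 ->
  st1.1 \subset st2.1 /\ exists t, st2.2 = st1.2 ++ t.
Proof.
elim=> [st|s1 s2 s3 step _ [A12 [t E12]]]; first by split=> //; exists [::]; rewrite cats0.
case: step A12 E12 => [A Ws x _ _ | A Ws w _ _] /= A12 E12.
- by split; [exact: subset_trans (subsetUl _ _) A12 | exists t].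
- by split=> //; exists (w :: t); rewrite E12 cat_rcons.
Qed.

Lemma reach_last_selection st1 st3 : reach st1 st3 -> forall W0 w,
  st3.2 = rcons W0 w -> (exists s, W0 = st1.2 ++ s) ->
  exists A1, [/\ reach st1 (A1, W0), Defs.closed m v tbv r A1 W0,
    max_priority sigma r tbp (potential m v tbv A1 W0 :\: winset W0) w &
    reach (A1, rcons W0 w) st3].
Proof.
elim=> [st|s1 s2 s3 step h23 IH] W0 w.
  by move=> -> [s] /(congr1 size); rewrite size_cat size_rcons; lia.
move=> E3 [s Es]; case: step h23 IH Es => [A Ws x hx hnot | A Ws w' hcl hmax] h23 IH /= Es.
  have [A1 [h1 ? ? ?]] := IH W0 w E3 (ex_intro _ s Es).
  by exists A1; split=> //; apply: reach_step h1; exact: closure_step.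
(* the rest of the run extends rcons Ws w', so w' is the next entry of W0 or w *)
have [_ [t Et]] := reach_mono h23; rewrite /= E3 Es rcons_cat cat_rcons in Et.
move/(congr1 (drop (size Ws))): Et; rewrite !drop_size_cat //.
case: s Es => [|a s] Es [Ew' Es'].
  rewrite cats0 in Es; subst W0 w'.
  by exists A; split=> //; exact: reach_refl.
subst a; have Es2 : W0 = rcons Ws w' ++ s by rewrite Es cat_rcons.
have [A1 [h1 ? ? ?]] := IH W0 w E3 (ex_intro _ s Es2).
by exists A1; split=> //; apply: reach_step h1; exact: select_step.
Qed.

End Runs.

Lemma path_exit n (rs : {set 'I_n}) (r : 'I_n -> {set 'I_n}) (X : {set 'I_n})
    (p : seq (option 'I_n)) (y : 'I_n) :
  rs \subset X -> path (edge rs r) None p -> last None p = Some y -> y \notin X ->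
  exists2 a, Some a \in p & (a \in X) && ~~ (r a \subset X).
Proof.
move=> rsX; suff gen : forall x0, (if x0 is Some a then a \in X else true) ->
    path (edge rs r) x0 p -> last x0 p = Some y -> y \notin X ->
    exists2 a, Some a \in x0 :: p & (a \in X) && ~~ (r a \subset X).
  by move=> hp hl yX; have [a ha hx] := gen None isT hp hl yX; exists a; rewrite // in_cons in ha.
elim: p => [|ob p IH] x0 x0X /=.
  by case: x0 x0X => // a aX _ [<-]; rewrite aX.
case: ob => [b|]; last by case: x0 x0X.
move=> /andP[x0b hp] hl yX.
have extend : b \in X -> exists2 a, Some a \in [:: x0, Some b & p] & (a \in X) && ~~ (r a \subset X).
  by move=> bX; have [c hc ?] := IH (Some b) bX hp hl yX; exists c; rewrite // in_cons hc orbT.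
case: x0 x0X x0b extend => [a|] /= x0X x0b extend; last exact/extend/(subsetP rsX).
case bX: (b \in X); first exact: extend.
exists a; first exact: mem_head.
by rewrite x0X; apply/negP => /subsetP /(_ b x0b); rewrite bX.
Qed.

Lemma last_selection (R : realDomainType) n m (rs : {set 'I_n}) (v : 'I_n -> R) (r : 'I_n -> {set 'I_n})
    (sigma : {set 'I_n} -> R) (tbv tbp : 'I_n -> nat) (A : {set 'I_n})
    (W0 : seq 'I_n) (wstar : 'I_n) :
  injective tbv -> mudan_run m rs v r sigma tbv tbp A (rcons W0 wstar) ->
  exists A1 : {set 'I_n}, [/\ rs \subset A1, Defs.closed m v tbv r A1 W0 &
    forall z, z \in A1 :\: winset W0 -> z != wstar ->
      z \notin potential m v tbv A1 W0 /\ ~~ beats v tbv z wstar].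
Proof.
move=> tbvI [run [_ finished]].
have [A1 [run1 closed1 [wP _] run2]] :=
  reach_last_selection run (erefl _) (ex_intro _ W0 (erefl _)).
have [rsA1 _] := reach_mono run1; have [A1A _] := reach_mono run2.
exists A1; split=> // z zAW0 zw.
have zAW : z \in A :\: winset (rcons W0 wstar).
  by move: zAW0; rewrite winset_rcons !inE negb_or zw => /andP[-> /(subsetP A1A)].
have no_supply := exhausted_supply finished zAW.
have one_left : (m - size W0 = 1)%N.
  by move: no_supply (potential_supply wP); rewrite size_rcons; lia.
have crowded : (1 < #|A1 :\: winset W0|)%N.
  have two : [set z; wstar] \subset A1 :\: winset W0.
    by apply/subsetP => t /set2P[] ->; [exact: zAW0 | exact: potential_sub wP].
  by move: (subset_leq_card two); rewrite cards2 zw.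
have Ptop := potential_last_item v tbv one_left crowded.
rewrite Ptop in wP; split; last exact: topk1_max wP zAW0.
apply: contra zw => zP; apply/eqP; apply: (topk1_unique tbvI _ wP).
by rewrite -Ptop in_setD zP andbT; move: zAW0; rewrite in_setD => /andP[].
Qed.

Theorem lemma4 (R : realDomainType) (n m : nat) (rs : {set 'I_n})
    (vt : 'I_n -> R) (rt : 'I_n -> {set 'I_n})
    (v : 'I_n -> R) (r : 'I_n -> {set 'I_n})
    (sigma : {set 'I_n} -> R) (tbv tbp : 'I_n -> nat)
    (A : {set 'I_n}) (Ws W0 : seq 'I_n) (wstar y : 'I_n) :
  (0 < m)%N ->
  (forall i, 0 <= vt i) ->
  (forall i, 0 <= v i) ->
  (forall i, r i \subset rt i) ->
  injective tbv -> injective tbp ->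
  (forall S T : {set 'I_n}, S \subset T -> sigma S <= sigma T) ->
  mudan_run m rs v r sigma tbv tbp A Ws ->
  Ws = rcons W0 wstar ->
  (forall w, w \in Ws -> v w < v y) ->
  critical rs r wstar y /\
  (v = vt -> r = rt -> ~ Bstar rs rt wstar y).
Proof.
move=> _ _ _ _ tbvI _ _ run EWs y_high; subst Ws.
have y_beats : beats v tbv y wstar by rewrite /beats y_high ?mem_rcons ?mem_head.
have yW0 : y \notin winset W0.
  by rewrite inE; apply/negP => yW; move: (y_high y); rewrite mem_rcons in_cons yW orbT ltxx => /(_ isT).
have yw : y != wstar by apply: contraL y_beats => /eqP ->; exact: beats_irr.
have [A1 [rsA1 closed1 others]] := last_selection tbvI run.
have crit : critical rs r wstar y.
  move=> p hp hl; apply: contraT => w_notin.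
  case yA1: (y \in A1).
    have yAW0 : y \in A1 :\: winset W0 by rewrite inE yW0 yA1.
    by have [_] := others y yAW0 yw; rewrite y_beats.
  have [a ap /andP[aA1 a_exits]] := path_exit rsA1 hp hl (negbT yA1).
  have aw : a != wstar by apply: contra w_notin => /eqP <-.
  have : a \notin winset W0 :|: (A1 :\: potential m v tbv A1 W0).
    by apply: contra a_exits; exact: closed1.
  rewrite in_setU in_setD negb_or aA1 andbT negbK => /andP[aW0 aP].
  have aAW0 : a \in A1 :\: winset W0 by rewrite in_setD aW0 aA1.
  by have [] := others a aAW0 aw; rewrite aP.
by split=> // _ <- Bst; exact: Bst crit.
Qed.
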